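(* Let $n\ge 1$, and suppose that for each $j<n$, $\tau^j_0,\tau^j_1,\ldots,\tau^j_{m_j}$ is an $(n+1)$-train. Let $c:[\mathbb{N}]^2\rightarrow\{R,B\}$ be any coloring. Then there is a function $c^*:\bigcup_{j<n}\bigcup_{i\le m_j}\tau^j_i\rightarrow\{R,B\}$ such that for every $j<n$ and $i\le m_j$ and every $\iota\in\{R,B\}$: if $c$ restricted to $[\tau^j_i]^2$ is constantly equal to $\iota$, then there is some $a\in\tau^j_i$ with $c^*(a)=\overline{\iota}$.
   Context: $[X]^2$ denotes the set of unordered $2$-element subsets of $X$. For $\iota\in\{R,B\}$, $\overline{\iota}$ denotes the opposite color: $\overline{R}=B$, $\overline{B}=R$. For $m\ge 1$, an $m$-train is a finite sequence $\tau_0,\tau_1,\ldots,\tau_k$ of pairwise distinct subsets of $\mathbb{N}$, each of size exactly $m$, such that for every $i<k$ and every $a\in\tau_{i+1}\setminus\tau_i$, we have $a>\max\tau_i$ (i.e. $a$ exceeds every element of $\tau_i$). *)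

From mathcomp Require Import all_boot.
Set Implicit Arguments. Unset Strict Implicit. Unset Printing Implicit Defensive.

Inductive color := R | B.
Definition opp (i : color) : color := match i with R => B | B => R end.

(* A finite subset of N is represented by a duplicate-free list of naturals
   (membership via \in, equality of sets via =i).
   [is_train m k t]: t 0, t 1, ..., t k is an m-train. *)
Definition is_train (m k : nat) (t : nat -> seq nat) : Prop :=
  [/\ (forall i, i <= k -> uniq (t i) /\ size (t i) = m),
      (forall i i', i <= k -> i' <= k -> i <> i' -> ~ (t i =i t i')) &
      (forall i, i < k -> forall a, a \in t i.+1 -> a \notin t i ->
         forall b, b \in t i -> b < a)].

(* A coloring of [N]^2 is given by c : nat -> nat -> color, where the
   unordered pair {a,b} with a < b receives color c a b. *)
Definition mono_on (c : nat -> nat -> color) (s : seq nat) (iota : color) : Prop :=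
  forall a b, a \in s -> b \in s -> a < b -> c a b = iota.

(* The coloring is built greedily from the top down.  Fix N above every point
   of every train; at stage k the colors of the points >= k have been chosen.
   A set of train j that is monochromatic in color [opp nu] wants a point of
   color nu; it is pending at stage k if it has a point >= k but none of color
   nu.  The slack of the stream (j, nu) is the least number of still uncolored
   points (those < k) of a pending set of train j, or n+1 if none is pending.
   The invariant [hall] asks that, for every t <= n, at most t streams have
   slack <= t.  It holds vacuously at stage N, and at stage 0 it rules out
   pending sets, which would have slack 0.

   From stage k+1 to stage k, only the streams whose slack is attained by a
   set containing k can lose slack, and only by one: these are the urgent
   streams.  Point k gets the color nu of an urgent stream of least slack,
   which satisfies all pending sets of that stream at once.  The count works
   because of the train structure: a set monochromatic in one color and a
   later set monochromatic in the other share at most one point below the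
   top of the former, since two shared points would carry both colors.  So
   when both streams of a train are pending, one of them has slack <= 1. *)

From HB Require Import structures.
From mathcomp Require Import all_boot order zify.
Set Implicit Arguments. Unset Strict Implicit. Unset Printing Implicit Defensive.
Import Order.TTheory.

Definition color_eqb (x y : color) : bool :=
  match x, y with R, R | B, B => true | _, _ => false end.
Lemma color_eqP : Equality.axiom color_eqb. Proof. by do 2 case; constructor. Qed.
HB.instance Definition _ := hasDecEq.Build color color_eqP.

Lemma oppK : involutive opp. Proof. by case. Qed.

Definition mono_onb (c : nat -> nat -> color) (s : seq nat) (iota : color) : bool :=
  all (fun a => all (fun b => (a < b) ==> (c a b == iota)) s) s.

Lemma mono_onP c s iota : reflect (mono_on c s iota) (mono_onb c s iota).
Proof.
apply: (iffP allP) => [mono a b aS bS ab | mono a aS].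
  by have /allP/(_ b bS)/implyP/(_ ab)/eqP := mono a aS.
by apply/allP => b bS; apply/implyP => ab; rewrite mono.
Qed.

Lemma count_lt_succ (s : seq nat) k :
  count (fun a => a < k.+1) s = count (fun a => a < k) s + count_mem k s.
Proof. by elim: s => //= a s ->; case: ltngtP => [||->] /=; lia. Qed.

Lemma count_le1 (T : eqType) (P : pred T) (s : seq T) :
  uniq s -> {in s &, forall a b, P a -> P b -> a = b} -> count P s <= 1.
Proof.
move=> us Ps; rewrite -size_filter.
case def_s: (filter P s) => [//|x s'].
have /andP [Px xs] : P x && (x \in s) by rewrite -mem_filter def_s mem_head.
rewrite -def_s; apply: (@uniq_leq_size _ _ [:: x]); first exact: filter_uniq.
by move=> y; rewrite mem_filter inE => /andP [Py ys]; rewrite (Ps y x).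
Qed.

Lemma exists_notin (T : eqType) (s1 s2 : seq T) :
  uniq s2 -> size s1 <= size s2 -> ~ (s1 =i s2) -> exists2 a, a \in s2 & a \notin s1.
Proof.
move=> us2 sz ne; case: (boolP (all (mem s1) s2)) => [/allP sub | /allPn //].
by case: ne => x; rewrite (uniq_min_size us2 sub sz).2.
Qed.

Lemma ltn_sum (I : finType) (F G : I -> nat) j :
  (forall i, F i <= G i) -> F j < G j -> \sum_i F i < \sum_i G i.
Proof.
move=> FG ltj; rewrite (bigD1 j) // [ltnRHS](bigD1 j) //= -addSn.
by apply: leq_add => //; apply: leq_sum.
Qed.

Lemma bigminn_le_cond (I : finType) x (P : pred I) (F : I -> nat) j :
  P j -> \big[minn/x]_(i | P i) F i <= F j.
Proof. by rewrite -minEnat; exact: (@bigmin_le_cond _ nat). Qed.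

Lemma leq_bigminn (I : finType) x (P : pred I) (F : I -> nat) b :
  b <= x -> (forall i, P i -> b <= F i) -> b <= \big[minn/x]_(i | P i) F i.
Proof. by rewrite -minEnat => bx bF; apply/(@bigmin_geP _ nat). Qed.

Lemma bigminn_witness (I : finType) x (P : pred I) (F : I -> nat) :
  (forall i, P i -> F i <= x) -> \big[minn/x]_(i | P i) F i < x ->
  exists2 i, P i & \big[minn/x]_(i | P i) F i = F i.
Proof.
rewrite -minEnat => Fx; case: (pickP P) => [j Pj _ | P0]; last by rewrite big_pred0 // ltnn.
by have [i Pi ->] := @eq_bigmin _ nat _ x j P F Pj Fx; exists i.
Qed.

Section Train.
Variables (s m : nat) (t : nat -> seq nat).
Hypothesis train_t : is_train s m t.

Lemma train_uniq i : i <= m -> uniq (t i).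
Proof. by case: train_t => H _ _ /H []. Qed.

Lemma train_size i : i <= m -> size (t i) = s.
Proof. by case: train_t => H _ _ /H []. Qed.

Lemma train_fresh i a b : i < m -> a \in t i.+1 -> a \notin t i -> b \in t i -> b < a.
Proof. by case: train_t => _ _ fresh im ai ani; exact: fresh im a ai ani b. Qed.

Lemma train_new i : i < m -> exists2 a, a \in t i.+1 & forall b, b \in t i -> b < a.
Proof.
move=> im; case: train_t => _ distinct _.
have [a ai1 ai] : exists2 a, a \in t i.+1 & a \notin t i.
  apply: exists_notin; first exact: train_uniq.
    by rewrite !train_size // ltnW.
  by apply: distinct; rewrite ?(ltnW im) //; lia.
by exists a => // b; apply: train_fresh.
Qed.

Lemma train_exceeds i i' b :
  i < i' -> i' <= m -> b \in t i -> exists2 a, a \in t i' & b < a.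
Proof.
move=> lti i'm bi; elim: i' lti i'm => // i' IH; rewrite ltnS leq_eqVlt.
case/predU1P => [<- | lti] i'm; have [a ai1 lt_a] := train_new i'm.
  by exists a; rewrite ?lt_a.
have [e ei' lt_be] := IH lti (ltnW i'm).
by exists a; last exact: ltn_trans lt_be (lt_a e ei').
Qed.

Lemma train_closed_below i i' a b :
  i <= i' -> i' <= m -> a \in t i' -> b \in t i -> a <= b -> a \in t i.
Proof.
move=> lei i'm ai' bi ab; elim: i' lei i'm a ai' ab => [|i' IH].
  by rewrite leqn0 => /eqP-> _.
rewrite leq_eqVlt ltnS => /predU1P [-> //|lei] i'm a ai1 ab.
case ai': (a \in t i'); first exact: IH lei (ltnW i'm) a ai' ab.
have [e ei' le_be] : exists2 e, e \in t i' & b <= e.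
  case: (ltngtP i i') lei => // [lti _ | <- _]; last by exists b.
  by have [e ? /ltnW] := train_exceeds lti (ltnW i'm) bi; exists e.
by have := train_fresh i'm ai1 (negbT ai') ei'; lia.
Qed.

End Train.

Definition hits (L : nat -> color) k (s : seq nat) nu :=
  has (fun a => (k <= a) && (L a == nu)) s.
Definition reaches k (s : seq nat) := has (leq k) s.
Definition below k (s : seq nat) := count (fun a => a < k) s.
Definition recolor (L : nat -> color) k nu : nat -> color :=
  fun a => if a == k then nu else L a.

Lemma hits_recolor L k nu0 s nu :
  hits (recolor L k nu0) k s nu = hits L k.+1 s nu || (k \in s) && (nu0 == nu).
Proof.
rewrite /hits /recolor; case: (eqVneq nu0 nu) => [<- | neq].
  rewrite andbT -has_pred1 -has_predU; apply: eq_has => a /=.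
  case: (eqVneq a k) => [->|ak]; rewrite ?ltnn ?leqnn ?eqxx //.
  by rewrite orbF leq_eqVlt eq_sym (negbTE ak).
rewrite andbF orbF; apply: eq_has => a /=.
case: (eqVneq a k) => [->|ak]; rewrite ?ltnn ?(negbTE neq) ?andbF //.
by rewrite leq_eqVlt eq_sym (negbTE ak).
Qed.

Lemma reaches_succ k s : reaches k s = reaches k.+1 s || (k \in s).
Proof.
rewrite /reaches -has_pred1 -has_predU; apply: eq_has => a /=.
by rewrite leq_eqVlt eq_sym orbC.
Qed.

Lemma below_succ k s : uniq s -> below k.+1 s = below k s + (k \in s).
Proof. by move=> us; rewrite /below count_lt_succ count_uniq_mem. Qed.

Lemma below_size k s : below k s <= size s.
Proof. exact: count_size. Qed.

Lemma below_size_eq k s : (below k s == size s) = ~~ reaches k s.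
Proof.
rewrite /below /reaches -all_count -[all _ s]negbK -has_predC; congr negb.
by apply: eq_has => a; rewrite /= -leqNgt.
Qed.

Section Recoloring.
Variables (n : nat) (m : nat -> nat) (tau : nat -> nat -> seq nat).
Variable c : nat -> nat -> color.
Hypothesis trains : forall j, j < n -> is_train n.+1 (m j) (tau j).

Definition wants j nu i := (i <= m j) && mono_onb c (tau j i) (opp nu).
Definition pending L k j nu i :=
  [&& wants j nu i, ~~ hits L k (tau j i) nu & reaches k (tau j i)].
Definition slack L k j nu :=
  \big[minn/n.+1]_(i < (m j).+1 | pending L k j nu i) below k (tau j i).
Definition tight L k j t := (slack L k j R <= t) + (slack L k j B <= t).
Definition hall L k := forall t, t <= n -> \sum_(j < n) tight L k j t <= t.

Lemma tightE L k j t nu : tight L k j t = (slack L k j nu <= t) + (slack L k j (opp nu) <= t).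
Proof. by case: nu; rewrite // addnC. Qed.

Lemma slack_le L k j nu : slack L k j nu <= n.+1.
Proof. by rewrite /slack -minEnat; exact: (@bigmin_le_id _ nat). Qed.

Lemma slack_le_pending L k j nu i :
  pending L k j nu i -> slack L k j nu <= below k (tau j i).
Proof.
move=> pend; have im : i < (m j).+1 by case/and3P: pend => /andP [].
exact: (bigminn_le_cond _ _ (j := Ordinal im) pend).
Qed.

Lemma leq_slack L k j nu b : b <= n.+1 ->
  (forall i, pending L k j nu i -> b <= below k (tau j i)) -> b <= slack L k j nu.
Proof. by move=> bn pend; apply: leq_bigminn => // i /pend. Qed.

Lemma slack_witness L k j nu : j < n -> slack L k j nu <= n ->
  exists2 i, pending L k j nu i & below k (tau j i) = slack L k j nu.
Proof.
move=> jn lt_slack.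
have below_le i : pending L k j nu i -> below k (tau j i) <= n.+1.
  case/and3P=> /andP [im _] _ _; rewrite -(train_size (trains jn) im); exact: below_size.
have [i pend eq_slack] := bigminn_witness (fun i : 'I__ => below_le i) lt_slack.
by exists i; rewrite // /slack eq_slack.
Qed.

Lemma wants_opp_below j i1 i2 nu b K : j < n -> i1 <= i2 ->
  wants j nu i1 -> wants j (opp nu) i2 -> b \in tau j i1 -> K <= b.+1 ->
  below K (tau j i2) <= 1.
Proof.
move=> jn le12 /andP [_ /mono_onP mono1] /andP [i2m /mono_onP mono2] bi1 Kb.
have in1 a : a \in tau j i2 -> a < K -> a \in tau j i1.
  by move=> ai aK; apply: (train_closed_below (trains jn) le12 i2m ai bi1); lia.
have ordered a a' : a \in tau j i2 -> a' \in tau j i2 -> a < K -> a' < K -> a < a' -> False.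
  move=> ai a'i aK a'K lt_aa'; move: (mono2 a a' ai a'i lt_aa').
  by rewrite (mono1 a a' (in1 a ai aK) (in1 a' a'i a'K) lt_aa'); case: nu {mono1 mono2}.
apply: count_le1 => [|a a' ai a'i aK a'K]; first exact: (train_uniq (trains jn) i2m).
by case: (ltngtP a a') => // lt; [case: (ordered a a') | case: (ordered a' a)].
Qed.

Lemma slack_pair_tight L k j nu : j < n ->
  slack L k j nu <= n -> slack L k j (opp nu) <= n -> 0 < tight L k j 1.
Proof.
rewrite (tightE _ _ _ _ nu) => jn.
move=> /(slack_witness jn) [i1 /and3P [w1 _ /hasP [b1 b1i kb1]] <-].
move=> /(slack_witness jn) [i2 /and3P [w2 _ /hasP [b2 b2i kb2]] <-].
case: (leqP i1 i2) => le; first by rewrite (wants_opp_below jn le w1 w2 b1i) //; lia.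
rewrite -(oppK nu) in w1.
by rewrite (wants_opp_below jn (ltnW le) w2 w1 b2i) //; lia.
Qed.

Definition urgent L k j nu := [exists i : 'I_(m j).+1,
  [&& wants j nu i, ~~ hits L k.+1 (tau j i) nu, k \in tau j i &
      below k.+1 (tau j i) == slack L k.+1 j nu]].

Lemma slack_le_unhit L k j nu i : j < n -> wants j nu i ->
  ~~ hits L k.+1 (tau j i) nu -> slack L k.+1 j nu <= below k.+1 (tau j i).
Proof.
move=> jn w unhit; case reach: (reaches k.+1 (tau j i)).
  by apply: slack_le_pending; rewrite /pending w unhit reach.
have im : i <= m j by case/andP: w.
have /eqP-> : below k.+1 (tau j i) == size (tau j i) by rewrite below_size_eq reach.
by rewrite (train_size (trains jn) im) slack_le.
Qed.

Lemma slack_recolor_succ L k j nu nu0 : j < n ->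
  slack L k.+1 j nu <= (slack (recolor L k nu0) k j nu).+1.
Proof.
move=> jn; suff : (slack L k.+1 j nu).-1 <= slack (recolor L k nu0) k j nu by lia.
apply: leq_slack => [|i /and3P [w]]; first by have := slack_le L k.+1 j nu; lia.
rewrite hits_recolor negb_or => /andP [unhit _] _.
have im : i <= m j by case/andP: w.
have := slack_le_unhit jn w unhit; rewrite below_succ ?(train_uniq (trains jn) im) //; lia.
Qed.

Lemma slack_recolor_calm L k j nu nu0 : j < n -> ~~ urgent L k j nu ->
  slack L k.+1 j nu <= slack (recolor L k nu0) k j nu.
Proof.
move=> jn calm; apply: leq_slack => [|i /and3P [w]]; first exact: slack_le.
rewrite hits_recolor negb_or => /andP [unhit _] _.
have im : i <= m j by case/andP: w.
have := slack_le_unhit jn w unhit; rewrite below_succ ?(train_uniq (trains jn) im) //.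
case ki: (k \in tau j i); rewrite ?addn0 // addn1 leq_eqVlt ltnS => /predU1P [eq_slack|//].
case/negP: calm; apply/existsP; exists (Ordinal (im : i < (m j).+1)).
by rewrite /= w unhit ki below_succ ?(train_uniq (trains jn) im) // ki addn1 eq_slack eqxx.
Qed.

Lemma slack_recolor_urgent L k j nu : j < n -> urgent L k j nu ->
  n < slack (recolor L k nu) k j nu.
Proof.
move=> jn /existsP [i0 /and4P [w0 unhit0 ki0 /eqP below0]].
have i0m : i0 <= m j by case/andP: w0.
apply: leq_slack => // i /and3P [w]; rewrite hits_recolor negb_or eqxx andbT.
case/andP=> unhit kNi reach; exfalso.
have im : i <= m j by case/andP: w.
have reach1 : reaches k.+1 (tau j i) by move: reach; rewrite reaches_succ (negbTE kNi) orbF.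
have := slack_le_pending (L := L) (nu := nu) (_ : pending L k.+1 j nu i).
rewrite /pending w unhit reach1 -below0 => /(_ isT).
case: (ltngtP i0 i) => [lt0 | lt0 | eq0]; last by rewrite -eq0 ki0 in kNi.
- have : below k.+1 (tau j i) <= below k (tau j i0).
    rewrite /below -!size_filter; apply: uniq_leq_size.
      exact/filter_uniq/(train_uniq (trains jn) im).
    move=> a; rewrite !mem_filter => /andP [ak ai].
    have ak' : a != k by apply: contraNneq kNi => <-.
    rewrite (train_closed_below (trains jn) (ltnW lt0) im ai ki0) ?andbT; lia.
  by rewrite (below_succ k (train_uniq (trains jn) i0m)) ki0; lia.
- case/hasP: reach1 => b bi kb.
  by case/negP: kNi; apply: (train_closed_below (trains jn) (ltnW lt0) i0m ki0 bi); lia.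
Qed.

Lemma urgent_top L k j nu : j < n -> urgent L k j nu -> n < slack L k.+1 j nu ->
  exists i, [/\ wants j nu i, k \in tau j i & ~~ reaches k.+1 (tau j i)].
Proof.
move=> jn /existsP [i /and4P [w _ ki /eqP below_i]] lt_slack; exists i; split => //.
have im : i <= m j by case/andP: w.
rewrite -below_size_eq (train_size (trains jn) im) below_i eqn_leq slack_le; exact: lt_slack.
Qed.

Lemma slack_opp_urgent_top L k j nu : j < n -> urgent L k j nu ->
  n < slack L k.+1 j nu -> slack L k.+1 j (opp nu) <= n -> slack L k.+1 j (opp nu) <= 1.
Proof.
move=> jn urg big /(slack_witness jn) [i /and3P [w _ /hasP [b bi kb]] <-].
have [i0 [w0 ki0 top0]] := urgent_top jn urg big.
have i0m : i0 <= m j by case/andP: w0.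
case: (ltnP i i0) => [lt | le]; last exact: wants_opp_below jn le w0 w ki0 _.
have [a ai0 ba] := train_exceeds (trains jn) lt i0m bi.
by case/hasP: top0; exists a => //; lia.
Qed.

Lemma urgent_top_pair L k j nu : 0 < n -> j < n ->
  urgent L k j nu -> n < slack L k.+1 j nu ->
  urgent L k j (opp nu) -> n < slack L k.+1 j (opp nu) -> False.
Proof.
move=> n0 jn urg big urg' big'.
have [i0 [w0 ki0 top0]] := urgent_top jn urg big.
have [i1 [w1 ki1 top1]] := urgent_top jn urg' big'.
have [i0m i1m] : i0 <= m j /\ i1 <= m j by case/andP: w0; case/andP: w1.
have above i i' : i < i' -> i' <= m j -> k \in tau j i -> ~~ reaches k.+1 (tau j i') -> False.
  move=> lt i'm ki /hasP top; have [a ai' ka] := train_exceeds (trains jn) lt i'm ki.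
  by apply: top; exists a.
case: (ltngtP i0 i1) => [lt | lt | eq].
- exact: above lt i1m ki0 top1.
- exact: above lt i0m ki1 top0.
have := wants_opp_below jn (eq_leq eq) w0 w1 ki0 (leqnn _).
move: top1; rewrite -below_size_eq (train_size (trains jn) i1m) => /eqP ->; lia.
Qed.

Lemma tight_recolor_succ L k j nu0 t : j < n ->
  tight (recolor L k nu0) k j t <= tight L k.+1 j t.+1.
Proof.
move=> jn; have := slack_recolor_succ L k R nu0 jn.
have := slack_recolor_succ L k B nu0 jn; rewrite /tight; lia.
Qed.

Lemma tight_recolor_calm L k j nu t : j < n -> t <= n ->
  ~~ (urgent L k j (opp nu) && (slack L k.+1 j (opp nu) <= t.+1)) ->
  tight (recolor L k nu) k j t <= tight L k.+1 j t.
Proof.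
move=> jn tn calm; rewrite !(tightE _ _ _ _ nu); apply: leq_add.
  case: (boolP (urgent L k j nu)) => [urg | calm_nu].
    by have := slack_recolor_urgent jn urg; lia.
  by have := slack_recolor_calm nu jn calm_nu; lia.
case: (boolP (urgent L k j (opp nu))) calm => [_ /= big | calm_opp _].
  by have := slack_recolor_succ L k (opp nu) nu jn; lia.
by have := slack_recolor_calm nu jn calm_opp; lia.
Qed.

Lemma tight_recolor_urgent L k j nu t : j < n -> t <= n -> urgent L k j nu ->
  slack L k.+1 j nu <= t.+1 -> tight (recolor L k nu) k j t < tight L k.+1 j t.+1.
Proof.
move=> jn tn urg small; rewrite !(tightE _ _ _ _ nu).
have := slack_recolor_urgent jn urg; have := slack_recolor_succ L k (opp nu) nu jn; lia.
Qed.

Lemma slack_recolor_pair L k j nu : j < n ->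
  slack (recolor L k nu) k j (opp nu) <= n -> slack L k.+1 j nu <= n -> 0 < tight L k.+1 j 1.
Proof.
move=> jn small' small; case: (leqP (slack L k.+1 j (opp nu)) n) => [|big].
  exact: slack_pair_tight.
case: (boolP (urgent L k j (opp nu))) => [urg | /(slack_recolor_calm nu jn)]; last by lia.
have := slack_opp_urgent_top jn urg big; rewrite oppK (tightE _ _ _ _ nu) => /(_ small); lia.
Qed.

Lemma tight_recolor_top L k j nu : j < n ->
  tight (recolor L k nu) k j n <= 1 + tight L k.+1 j 1.
Proof.
move=> jn; rewrite (tightE _ _ _ _ nu).
case: (leqP (slack (recolor L k nu) k j nu) n) => [small | ]; last by lia.
case: (leqP (slack (recolor L k nu) k j (opp nu)) n) => [small' | ]; last by lia.
have calm : ~~ urgent L k j nu.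
  by apply: contraTN small => /(slack_recolor_urgent jn); rewrite -ltnNge.
by have := slack_recolor_pair jn small' (leq_trans (slack_recolor_calm nu jn calm) small); lia.
Qed.

Lemma tight_recolor_urgent_top L k j nu : 0 < n -> j < n -> urgent L k j nu ->
  tight (recolor L k nu) k j n <= tight L k.+1 j 1.
Proof.
move=> n0 jn urg; rewrite (tightE _ _ _ _ nu); have := slack_recolor_urgent jn urg.
case: (leqP (slack (recolor L k nu) k j (opp nu)) n) => [small' | ]; last by lia.
case: (leqP (slack L k.+1 j nu) n) => [small | big].
  by have := slack_recolor_pair jn small' small; lia.
case: (leqP (slack L k.+1 j (opp nu)) n) => [small_opp | big_opp].
  by have := slack_opp_urgent_top jn urg big small_opp; rewrite (tightE _ _ _ _ nu); lia.
case: (boolP (urgent L k j (opp nu))) => [urg' | /(slack_recolor_calm nu jn)]; last by lia.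
by case: (urgent_top_pair n0 jn urg big urg' big_opp).
Qed.

Lemma hall_recolor L k nu : 0 < n -> hall L k.+1 ->
  (forall j, j < n -> urgent L k j (opp nu) -> exists2 jw, jw < n &
     urgent L k jw nu && (slack L k.+1 jw nu <= slack L k.+1 j (opp nu))) ->
  hall (recolor L k nu) k.
Proof.
move=> n0 hallL cover t tn.
case: (boolP [exists j : 'I_n, urgent L k j (opp nu) && (slack L k.+1 j (opp nu) <= t.+1)]).
  case/existsP=> j /andP [urg small].
  have [jw jwn /andP [urgw le_w]] := cover j (ltn_ord j) urg.
  case: (ltnP t n) => [ltn | ge_t].
    have : \sum_(j < n) tight (recolor L k nu) k j t < \sum_(j < n) tight L k.+1 j t.+1.
      apply: (ltn_sum (j := Ordinal jwn)) => [i|]; first exact: tight_recolor_succ (ltn_ord i).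
      exact: tight_recolor_urgent jwn tn urgw (leq_trans le_w small).
    by move/leq_trans/(_ (hallL t.+1 ltn)).
  have -> : t = n by apply/eqP; rewrite eqn_leq tn.
  have : \sum_(j < n) tight (recolor L k nu) k j n < \sum_(j < n) (1 + tight L k.+1 j 1).
    apply: (ltn_sum (j := Ordinal jwn)) => [i|]; first exact: tight_recolor_top (ltn_ord i).
    by rewrite add1n ltnS; exact: tight_recolor_urgent_top n0 jwn urgw.
  rewrite [X in _ < X]big_split sum1_card card_ord => lt_sum.
  by rewrite -ltnS (leq_trans lt_sum) // -[n.+1]addn1 leq_add2l; exact: hallL 1 n0.
rewrite negb_exists => /forallP calm; apply: leq_trans (hallL t tn).
by apply: leq_sum => j _; apply: tight_recolor_calm (ltn_ord j) tn (calm j).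
Qed.

Lemma urgent_min L k j0 nu0 : j0 < n -> urgent L k j0 nu0 ->
  exists jw nu, [/\ jw < n, urgent L k jw nu & forall j nu', j < n ->
    urgent L k j nu' -> slack L k.+1 jw nu <= slack L k.+1 j nu'].
Proof.
move=> j0n urg0; pose has_slack v := [exists j : 'I_n,
  has (fun nu => urgent L k j nu && (slack L k.+1 j nu == v)) [:: R; B]].
have has_slackP j nu : j < n -> urgent L k j nu -> has_slack (slack L k.+1 j nu).
  move=> jn urg; apply/existsP; exists (Ordinal jn); apply/hasP; exists nu.
    by case: nu {urg}.
  by rewrite urg eqxx.
have [v /existsP [jw /hasP [nu _ /andP [urgw /eqP slack_w]]] min_v] :=
  ex_minnP (ex_intro has_slack _ (has_slackP _ _ j0n urg0)).
by exists jw, nu; split => // j nu' jn urg; rewrite slack_w; exact/min_v/has_slackP.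
Qed.

Lemma hall_step L k : 0 < n -> hall L k.+1 -> exists nu, hall (recolor L k nu) k.
Proof.
move=> n0 hallL.
case: (boolP [exists j : 'I_n, urgent L k j R || urgent L k j B]) => [| none].
  case/existsP=> j0 /orP [] urg0;
    have [jw [nu [jwn urgw minw]]] := urgent_min (ltn_ord j0) urg0;
    by exists nu; apply: hall_recolor => // j jn urg; exists jw; rewrite // urgw minw.
exists R; apply: hall_recolor => // j jn urg; case/negP: none.
by apply/existsP; exists (Ordinal jn); rewrite urg orbT.
Qed.

Lemma hall_top L N : (forall j i a, j < n -> i <= m j -> a \in tau j i -> a < N) -> hall L N.
Proof.
move=> bounded t tn; rewrite big1 // => j _.
suff unreached nu : n < slack L N j nu.
  by have := unreached R; have := unreached B; rewrite /tight; lia.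
apply: leq_slack => // i /and3P [/andP [im _] _ /hasP [a ai Na]].
by have := bounded j i a (ltn_ord j) im ai; lia.
Qed.

Lemma hall_bottom L j i nu : hall L 0 -> j < n -> wants j nu i -> hits L 0 (tau j i) nu.
Proof.
move=> hallL jn w; apply/negPn/negP => unhit.
have im : i <= m j by case/andP: w.
have reach : reaches 0 (tau j i).
  by rewrite /reaches has_predT (train_size (trains jn) im).
have : slack L 0 j nu <= below 0 (tau j i).
  by apply: slack_le_pending; rewrite /pending w unhit reach.
have -> : below 0 (tau j i) = 0 by rewrite /below; elim: (tau j i).
have := hallL 0 (leq0n n); rewrite leqn0 (bigD1 (Ordinal jn)) //= (tightE _ _ _ _ nu); lia.
Qed.

Lemma hall_down L N : 0 < n -> hall L N -> exists L', hall L' 0.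
Proof.
move=> n0; elim: N L => [|N IH] L hallL; first by exists L.
by have [nu] := hall_step n0 hallL; exact: IH.
Qed.

Lemma trains_bounded :
  exists N, forall j i a, j < n -> i <= m j -> a \in tau j i -> a < N.
Proof.
exists (\max_(j < n) \max_(i < (m j).+1) \max_(a <- tau j i) a.+1) => j i a jn im ai.
apply: (leq_trans _ (leq_bigmax (Ordinal jn))).
apply: (leq_trans _ (leq_bigmax (Ordinal (im : i < (m j).+1)))).
exact: leq_bigmax_seq.
Qed.

End Recoloring.

Theorem mainTheorem1 (n : nat) (hn : 1 <= n) (m : nat -> nat)
    (tau : nat -> nat -> seq nat)
    (htrain : forall j, j < n -> is_train n.+1 (m j) (tau j))
    (c : nat -> nat -> color) :
  exists cstar : nat -> color,
    forall j i (iota : color), j < n -> i <= m j ->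
      mono_on c (tau j i) iota ->
      exists2 a, a \in tau j i & cstar a = opp iota.
Proof.
have [N bounded] := trains_bounded n m tau.
have [L hallL] := hall_down htrain hn (hall_top c (fun=> R) bounded).
exists L => j i iota jn im /mono_onP mono.
have /hasP [a ai /andP [_ /eqP La]] : hits L 0 (tau j i) (opp iota).
  by apply: (hall_bottom htrain hallL jn); rewrite /wants im oppK.
by exists a.
Qed.
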